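(* Let $m\ge 2$, let $\varepsilon \le \frac{1}{2^{3m}\cdot 4m}$ be a power of 2, let $0<\tau<1$, and let $\mathcal{G} = \{2^{-i}\varepsilon j : i \in \mathbb{Z},\ j \in \{1,\dots,2/\varepsilon^2 - 1\}\} \cap (0,1)$. Consider the following rounding procedure applied to a value $x \in [0,1]$: while $x \ge \tau$, let $y$ be the largest element of $\mathcal{G}$ with $y \le x$, output $y$ as a new state and replace $x$ by $x-y$; when $x<\tau$, output the remaining $x$ as a final state. If this procedure is applied to each state of a discrete distribution $p_i$ with at most $n$ states (replacing each state by the multiset of outputs), then the resulting distribution has at most $n\lceil 1 + \log_2(1/\tau)\rceil$ states.
   Context: Logarithms are base 2. *)

From HB Require Import structures.
From mathcomp Require Import all_boot all_order all_algebra.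
From mathcomp Require Import all_classical all_reals all_analysis.
Set Implicit Arguments. Unset Strict Implicit. Unset Printing Implicit Defensive.
Import Order.TTheory GRing.Theory Num.Theory.
Local Open Scope ring_scope.

Definition log2 {R : realType} (x : R) : R := ln x / ln 2.

Definition in_grid {R : realType} (eps g : R) : Prop :=
  (exists (i : int) (j : nat),
      (1 <= j)%N /\ j%:R <= 2 / eps ^+ 2 - 1 /\
      g = (2 : R) ^ (- i) * eps * j%:R)
  /\ 0 < g /\ g < 1.

Definition largest_grid_below {R : realType} (eps x y : R) : Prop :=
  in_grid eps y /\ y <= x /\ forall g, in_grid eps g -> g <= x -> g <= y.

Inductive round_outputs {R : realType} (eps tau : R) : R -> seq R -> Prop :=
| ro_stop x : x < tau -> round_outputs eps tau x [:: x]
| ro_step x y s : tau <= x -> largest_grid_below eps x y ->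
    round_outputs eps tau (x - y) s -> round_outputs eps tau x (y :: s).

Definition power_of_2 {R : realType} (eps : R) : Prop :=
  exists k : int, eps = (2 : R) ^ k.

From HB Require Import structures.
From mathcomp Require Import all_boot all_order all_algebra.
From mathcomp Require Import all_classical all_reals all_analysis.
From mathcomp Require Import lra.
Set Implicit Arguments. Unset Strict Implicit. Unset Printing Implicit Defensive.
Import Order.TTheory GRing.Theory Num.Theory.
Local Open Scope ring_scope.

(* Since eps is a power of 2, grid points are dyadic numbers j / 2 ^ e, and
   above any positive bound their denominators are bounded; so the largest
   grid point y <= x exists. The interval (x / 2, x) always contains a grid
   point, hence y > x / 2 and each rounding step more than halves the
   remainder. A run with k >= 3 outputs therefore starts at some
   x > tau 2 ^ (k - 2), and x <= 1 gives k <= ceil (1 + log2 (1 / tau)). Summing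
   over the at most n states of the distribution gives the bound. *)

Lemma size_flatten_leq (T : eqType) (ss : seq (seq T)) (c : nat) :
  (forall s, s \in ss -> size s <= c)%N -> (size (flatten ss) <= size ss * c)%N.
Proof.
elim: ss => //= s ss IH le_c; rewrite size_cat mulSn leq_add ?le_c ?mem_head //.
by apply: IH => t t_in; apply: le_c; rewrite inE t_in orbT.
Qed.

Lemma seq_choice (T U : Type) (x0 : T) (y0 : U) (P : T -> U -> Prop) (xs : seq T) :
  (forall i, (i < size xs)%N -> exists y, P (nth x0 xs i) y) ->
  exists ys, size ys = size xs /\
    forall i, (i < size xs)%N -> P (nth x0 xs i) (nth y0 ys i).
Proof.
elim: xs => [|x xs IH] exP; first by exists [::].
have [y Py] := exP 0%N isT.
have [ys [size_ys Pys]] := IH (fun i => exP i.+1).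
exists (y :: ys); split=> [|[|i] /= lt_i //]; first by rewrite /= size_ys.
exact: Pys.
Qed.

Lemma exists_pow2_gt (R : realType) (a : R) : exists n : nat, a < 2 ^+ n.
Proof.
exists (Num.Def.archi_bound `|a|); apply: le_lt_trans (ler_norm a) _.
apply: lt_le_trans (archi_boundP (normr_ge0 a)) _.
by rewrite -natrX ler_nat ltnW // ltn_expl.
Qed.

Lemma exists_pow2_scale (R : realType) (x : R) :
  0 < x -> x <= 2 -> exists e : nat, 1 < x * 2 ^+ e <= 2.
Proof.
move=> x_gt0 x_le2; have [n lt_n] := exists_pow2_gt x^-1.
have ex_e : exists e, 1 < x * 2 ^+ e.
  by exists n; rewrite -ltr_pdivrMl // mulr1.
case: (ex_minnP ex_e) => e gt1 min_e; exists e; rewrite gt1 /=.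
case: e gt1 min_e => [|e] _ min_e; first by rewrite expr0 mulr1.
have le1 : x * 2 ^+ e <= 1 by rewrite leNgt; apply/negP => /min_e; rewrite ltnn.
by rewrite exprS mulrCA; lra.
Qed.

Lemma nat_le_ceil (R : realType) (k : nat) (a : R) :
  k%:R - 1 < a -> (k%:Z <= Num.ceil a)%R.
Proof. by rewrite -ltzD1 -ltrBlDr ceil_gt_int intrB -!pmulrn. Qed.

Lemma ltr_nat_log2 (R : realType) (k : nat) (a : R) : 2 ^+ k < a -> k%:R < log2 a.
Proof.
move=> lt_a; have ln2_gt0 : 0 < ln (2 : R) by rewrite ln_gt0 // ltr1n.
have a_gt0 : 0 < a by apply: lt_trans lt_a; rewrite exprn_gt0.
by rewrite /log2 ltr_pdivlMr // mulr_natl -lnXn // ltr_ln // posrE exprn_gt0.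
Qed.

Lemma power_of_2_gt0 (R : realType) (eps : R) : power_of_2 eps -> 0 < eps.
Proof. by case=> k ->; rewrite exprz_gt0. Qed.

Section Grid.
Context {R : realType} {eps : R}.
Hypothesis eps_pow2 : power_of_2 eps.
Hypothesis eps_le_half : eps <= 1 / 2.

Let eps_gt0 : 0 < eps := power_of_2_gt0 eps_pow2.

Lemma dyadic_in_grid (e j : nat) :
  (0 < j <= 7)%N -> j%:R / 2 ^+ e < 1 :> R -> in_grid eps (j%:R / 2 ^+ e).
Proof.
move=> /andP[j_gt0 j_le7] lt1.
split; last by split=> //; rewrite divr_gt0 ?exprn_gt0 // ltr0n.
have [k epsE] := eps_pow2; exists (k + e%:Z), j; split=> //; split.
- have eps2_gt0 : 0 < eps ^+ 2 by rewrite exprn_gt0 ?eps_gt0.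
  have : 8 <= 2 / eps ^+ 2.
    have : eps * eps <= eps * (1 / 2) by rewrite ler_pM2l ?eps_gt0.
    by rewrite ler_pdivlMr // expr2; nra.
  have : (j%:R : R) <= 7%:R by rewrite ler_nat.
  lra.
- rewrite epsE -expfzDr ?pnatr_eq0 // opprD addrAC addNr add0r.
  by rewrite -exprnN mulrC.
Qed.

Lemma grid_between_half (x : R) :
  0 < x -> x <= 1 -> exists g, [/\ in_grid eps g, x / 2 < g & g < x].
Proof.
move=> x_gt0 x_le1.
have [e /andP[lt1 le2]] := exists_pow2_scale x_gt0 (le_trans x_le1 (ler1n _ 2)).
(* With [T = 2 ^ (e + 1)], [x T] lies in (2, 4], so 2 or 3 lies strictly
   between [x T / 2] and [x T]. *)
pose T : R := 2 ^+ e.+1.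
have T_gt0 : 0 < T by rewrite exprn_gt0.
have xT : 2 < x * T <= 4 by rewrite /T exprS mulrCA; apply/andP; split; lra.
suff [j [j_bd lo hi]] :
    exists j : nat, [/\ (0 < j <= 7)%N, x * T / 2 < j%:R & j%:R < x * T].
  have j_lt_x : j%:R / T < x by rewrite ltr_pdivrMr // mulrC.
  exists (j%:R / T); split=> //; last by rewrite ltr_pdivlMr // mulrAC.
  by apply: dyadic_in_grid => //; apply: lt_le_trans j_lt_x x_le1.
have [le3|gt3] := leP (x * T) 3; [exists 2%N | exists 3%N]; split=> //; lra.
Qed.

Lemma grid_above_dyadic (b : R) : 0 < b ->
  exists e : nat, forall g, in_grid eps g -> b < g ->
    exists N : nat, g = N%:R / 2 ^+ e.
Proof.
move=> b_gt0; have [k epsE] := eps_pow2.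
have eps2_gt0 : 0 < eps ^+ 2 by rewrite exprn_gt0 ?eps_gt0.
have [e lt_e] := exists_pow2_gt (2 / eps ^+ 2 / b).
rewrite ltr_pdivrMr // in lt_e.
exists e => g [[i [j [_ [j_le gE]]]] _] b_lt_g.
have D_gt0 : 0 < (2 : R) ^ (k - i) by rewrite exprz_gt0.
have E_gt0 : 0 < (2 : R) ^+ e by rewrite exprn_gt0.
have {}gE : g = 2 ^ (k - i) * j%:R.
  by rewrite gE epsE -expfzDr ?pnatr_eq0 // addrC.
(* [b < g] and [j < 2 / eps ^ 2 < b 2 ^ e] force [2 ^ (k - i) > 2 ^ (- e)]. *)
have DE_gt1 : 1 < 2 ^ (k - i) * (2 : R) ^+ e.
  have : b < 2 ^ (k - i) * (2 ^+ e * b).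
    apply: (lt_le_trans b_lt_g); rewrite gE ler_pM2l //; apply: ltW; lra.
  by rewrite mulrA -ltr_pdivrMr // divff ?gt_eqF.
have : (0 <= k - i + e%:Z)%R.
  rewrite -(ler_eXz2l (x := 2 : R)) ?ltr1n //.
  by rewrite expfzDr ?pnatr_eq0 // -exprnP; apply: ltW.
case nE : (k - i + e%:Z) => [n|//] _.
exists (2 ^ n * j)%N.
rewrite gE natrM natrX exprnP -nE [in RHS]expfzDr ?pnatr_eq0 // -exprnP.
by rewrite mulrAC mulfK // gt_eqF.
Qed.

Lemma largest_grid_below_exists (x : R) :
  0 < x -> x <= 1 -> exists y, largest_grid_below eps x y.
Proof.
move=> x_gt0 x_le1.
have [g0 [g0_grid g0_gt g0_lt]] := grid_between_half x_gt0 x_le1.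
have [e dyadic] := grid_above_dyadic (divr_gt0 x_gt0 (ltr0n _ 2)).
have E_gt0 : 0 < (2 : R) ^+ e by rewrite exprn_gt0.
pose P N := `[< in_grid eps (N%:R / 2 ^+ e) /\ N%:R / 2 ^+ e <= x >].
have [N0 g0E] := dyadic g0 g0_grid g0_gt.
have P_N0 : P N0 by apply/asboolP; rewrite -g0E; split=> //; apply: ltW.
have P_bounded N : P N -> (N <= 2 ^ e)%N.
  case/asboolP=> _; rewrite ler_pdivrMr // => le_x.
  rewrite -(ler_nat R) natrX; apply: le_trans le_x _.
  by rewrite ler_piMl // ltW.
case: (ex_maxnP (ex_intro _ N0 P_N0) P_bounded) => Nm /asboolP[Nm_grid Nm_le] Nm_max.
have le_y N : P N -> N%:R / 2 ^+ e <= Nm%:R / 2 ^+ e :> R.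
  by move=> /Nm_max; rewrite ler_pM2r ?invr_gt0 // ler_nat.
exists (Nm%:R / 2 ^+ e); split=> //; split=> // g g_grid g_le.
have [g_small|g_big] := leP g (x / 2).
  by apply: le_trans (le_y _ P_N0); rewrite -g0E; lra.
have [N gE] := dyadic g g_grid g_big.
by rewrite gE; apply: le_y; apply/asboolP; rewrite -gE.
Qed.

Lemma largest_grid_below_gt_half (x y : R) :
  0 < x -> x <= 1 -> largest_grid_below eps x y -> x / 2 < y.
Proof.
move=> x_gt0 x_le1 [_ [_ y_max]].
have [g [g_grid g_gt g_lt]] := grid_between_half x_gt0 x_le1.
exact: lt_le_trans g_gt (y_max g g_grid (ltW g_lt)).
Qed.

End Grid.

Section Rounding.
Context {R : realType} {eps tau : R}.
Hypothesis eps_pow2 : power_of_2 eps.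
Hypothesis eps_le_half : eps <= 1 / 2.
Hypothesis tau_gt0 : 0 < tau.

Lemma round_outputs_exist (x : R) :
  0 <= x <= 1 -> exists s, round_outputs eps tau x s.
Proof.
move=> /andP[x_ge0 x_le1]; have [n lt_n] := exists_pow2_gt tau^-1.
have : x < tau * 2 ^+ n.
  by apply: le_lt_trans x_le1 _; rewrite -ltr_pdivrMl // mulr1.
elim: n x x_ge0 x_le1 {lt_n} => [|n IH] x x_ge0 x_le1 x_lt.
  by exists [:: x]; apply: ro_stop; rewrite expr0 mulr1 in x_lt.
have [x_lt_tau|tau_le_x] := ltP x tau; first by exists [:: x]; apply: ro_stop.
have x_gt0 : 0 < x by apply: lt_le_trans tau_le_x.
have [y y_max] := largest_grid_below_exists eps_pow2 eps_le_half x_gt0 x_le1.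
have y_gt := largest_grid_below_gt_half eps_pow2 eps_le_half x_gt0 x_le1 y_max.
have [_ [y_le_x _]] := y_max.
have [s run] : exists s, round_outputs eps tau (x - y) s.
  apply: IH; [lra | lra |].
  by move: x_lt; rewrite exprS mulrCA; lra.
by exists (y :: s); apply: ro_step.
Qed.

Lemma round_outputs_start_ge_tau (x : R) (s : seq R) :
  round_outputs eps tau x s -> (1 < size s)%N -> tau <= x.
Proof. by case. Qed.

Lemma round_outputs_long_start_gt (x : R) (s : seq R) :
  round_outputs eps tau x s -> x <= 1 -> (2 < size s)%N ->
  tau * 2 ^+ (size s - 2) < x.
Proof.
elim=> {x s} [//|x y s tau_le_x y_max run IH] x_le1 /= long.
have x_gt0 : 0 < x by apply: lt_le_trans tau_le_x.
have y_gt := largest_grid_below_gt_half eps_pow2 eps_le_half x_gt0 x_le1 y_max.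
have lower : tau * 2 ^+ (size s - 2) <= x - y.
  have [long_s|] := ltnP 2 (size s); first by apply/ltW/IH => //; lra.
  rewrite -subn_eq0 => /eqP ->; rewrite expr0 mulr1.
  exact: round_outputs_start_ge_tau run long.
by rewrite subSn // exprS mulrCA; lra.
Qed.

Lemma size_round_outputs_le_ceil (x : R) (s : seq R) :
  tau < 1 -> x <= 1 -> round_outputs eps tau x s ->
  ((size s)%:Z <= Num.ceil (1 + log2 (1 / tau)))%R.
Proof.
move=> tau_lt1 x_le1 run.
have pow_lt : 2 ^+ (size s - 2) < 1 / tau.
  rewrite ltr_pdivlMr // mulrC.
  have [long|] := ltnP 2 (size s).
    exact: lt_le_trans (round_outputs_long_start_gt run x_le1 long) x_le1.
  by rewrite -subn_eq0 => /eqP ->; rewrite expr0 mulr1.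
apply: nat_le_ceil.
have := ltr_nat_log2 pow_lt.
have : (size s <= 2 + (size s - 2))%N by rewrite -leq_subLR.
by rewrite -(ler_nat R) natrD; lra.
Qed.

End Rounding.

Theorem claim5 (R : realType) (m n : nat) (eps tau : R) (p : seq R) :
  (2 <= m)%N ->
  power_of_2 eps ->
  eps <= 1 / ((2 : R) ^+ (3 * m) * (4 * m)%:R) ->
  0 < tau -> tau < 1 ->
  (size p <= n)%N ->
  (forall x, x \in p -> 0 <= x <= 1) ->
  \sum_(x <- p) x = 1 ->
  (exists outs : seq (seq R), size outs = size p /\
     forall i, (i < size p)%N -> round_outputs eps tau (nth 0 p i) (nth [::] outs i))
  /\
  (forall outs : seq (seq R), size outs = size p ->
     (forall i, (i < size p)%N -> round_outputs eps tau (nth 0 p i) (nth [::] outs i)) ->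
     (size (flatten outs))%:R <= n%:R * ((Num.ceil (1 + log2 (1 / tau)))%:~R : R)).
Proof.
move=> m_ge2 eps_pow2 eps_le tau_gt0 tau_lt1 size_p p01 _.
have eps_le_half : eps <= 1 / 2.
  have two_le : 2 <= (2 : R) ^+ (3 * m) * (4 * m)%:R.
    rewrite -natrX -natrM (ler_nat R 2).
    apply: leq_trans (leq_pmull _ (expn_gt0 2 _)) => //.
    by rewrite (leq_trans m_ge2) ?leq_pmull.
  by apply: le_trans eps_le _; rewrite ler_pdivrMr; lra.
have p01_nth i : (i < size p)%N -> 0 <= nth 0 p i <= 1.
  by move=> /(mem_nth 0)/p01.
split.
  apply: seq_choice => i /p01_nth x01.
  exact (round_outputs_exist eps_pow2 eps_le_half tau_gt0 x01).
move=> outs size_outs runs; set C := Num.ceil _.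
have C_ge0 : (0 <= C)%R.
  have : 0 < log2 (1 / tau).
    by apply: (ltr_nat_log2 (k := 0)); rewrite expr0 ltr_pdivlMr // mul1r.
  by rewrite ceil_ge0; lra.
have outs_le s : s \in outs -> (size s <= `|C|)%N.
  case/(nthP [::]) => i; rewrite size_outs => lt_i <-.
  rewrite -lez_nat gez0_abs //.
  have [_ x_le1] := andP (p01_nth i lt_i).
  exact (size_round_outputs_le_ceil eps_pow2 eps_le_half tau_gt0 tau_lt1 x_le1 (runs i lt_i)).
have : (size (flatten outs) <= n * `|C|)%N.
  apply: leq_trans (size_flatten_leq outs_le) _.
  by rewrite size_outs leq_mul2r size_p orbT.
by rewrite -[C](gez0_abs C_ge0) -(ler_nat R) natrM.
Qed.
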